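(* If $G$ is a very well-covered graph of girth at least $5$, then $\Psi(G)$ is a greedoid on $V(G)$.
   Context: All graphs are finite, simple, undirected. For $A\subseteq V(G)$, $N(A)=\{v\in V(G)-A: N(v)\cap A\neq\emptyset\}$ and $N[A]=A\cup N(A)$; $G[X]$ is the subgraph induced by $X$. A stable set is a set of pairwise non-adjacent vertices; $\alpha(G)$ is the maximum size of a stable set. $G$ is well-covered if all its maximal stable sets have the same cardinality, and very well-covered if it is well-covered, has no isolated vertices, and $|V(G)|=2\alpha(G)$. A set $A\subseteq V(G)$ is a local maximum stable set of $G$ if $A$ is a maximum stable set of $G[N[A]]$; $\Psi(G)$ denotes the family of all local maximum stable sets of $G$. A greedoid on a finite set $V$ is a non-empty family $\mathcal{F}\subseteq 2^V$ such that (Accessibility) every non-empty $X\in\mathcal{F}$ has an element $x\in X$ with $X-\{x\}\in\mathcal{F}$, and (Exchange) for all $X,Y\in\mathcal{F}$ with $|X|=|Y|+1$ there is $x\in X-Y$ with $Y\cup\{x\}\in\mathcal{F}$. *)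

(* A finite simple graph is a symmetric irreflexive relation
   e on a finite vertex type T; V(G) = [set: T]. *)
From mathcomp Require Import all_boot.
Set Implicit Arguments. Unset Strict Implicit. Unset Printing Implicit Defensive.

Section Graph.
Variable T : finType.
Variable e : rel T.

Definition simple_graph : Prop := symmetric e /\ irreflexive e.

Definition nbhd (A : {set T}) : {set T} :=
  [set v | (v \notin A) && [exists a in A, e v a]].
Definition cnbhd (A : {set T}) : {set T} := A :|: nbhd A.

Definition stable (S : {set T}) : bool :=
  [forall x in S, forall y in S, ~~ e x y].

Definition alpha : nat := \max_(S : {set T} | stable S) #|S|.

Definition maximal_stable (S : {set T}) : bool :=
  stable S && [forall v, (v \notin S) ==> ~~ stable (v |: S)].

Definition well_covered : Prop :=
  forall S1 S2 : {set T}, maximal_stable S1 -> maximal_stable S2 -> #|S1| = #|S2|.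

Definition no_isolated : Prop := forall v : T, exists u : T, e v u.

Definition very_well_covered : Prop :=
  well_covered /\ no_isolated /\ #|T| = 2 * alpha.

Definition girth_ge5 : Prop :=
  (forall a b c : T, ~ (e a b /\ e b c /\ e c a)) /\
  (forall a b c d : T, a != c -> b != d -> ~ (e a b /\ e b c /\ e c d /\ e d a)).

Definition max_stable_in (X A : {set T}) : bool :=
  [&& A \subset X, stable A &
      [forall B : {set T}, (B \subset X) && stable B ==> (#|B| <= #|A|)]].

Definition local_max_stable (A : {set T}) : bool := max_stable_in (cnbhd A) A.

Definition Psi : {set {set T}} := [set A | local_max_stable A].

End Graph.

Definition greedoid (T : finType) (F : {set {set T}}) : Prop :=
  F != set0 /\
  (forall X, X \in F -> X != set0 -> exists2 x, x \in X & X :\ x \in F) /\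
  (forall X Y, X \in F -> Y \in F -> #|X| = #|Y|.+1 ->
     exists2 x, x \in X :\: Y & x |: Y \in F).

(* Deleting the closed neighbourhood of a vertex v from a well-covered G[U]
   leaves a well-covered graph whose independence number is one less.  If v is a leaf, G[U] - N[v] has no isolated vertex, since two
   leaves at one vertex contradict well-coveredness; if G[U] has no leaf, it
   has none either, since girth 5 excludes 4-cycles, and then at least three
   vertices were deleted.  By induction 2 alpha(G[U]) <= |U|, with equality
   only if G[U] has a perfect matching.  When |V| = 2 alpha, girth 5 forces
   every edge {v, m v} of this matching to have a leaf end.  Then A is a local
   maximum stable set iff A is stable and N[A] is closed under m, and both
   greedoid axioms follow by removing, resp. adding, a suitably chosen leaf or
   non-leaf vertex. *)

From mathcomp Require Import all_boot.
Set Implicit Arguments. Unset Strict Implicit. Unset Printing Implicit Defensive.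

Section Graph.
Variable T : finType.
Variable e : rel T.
Hypothesis sym_e : symmetric e.
Hypothesis irr_e : irreflexive e.

Lemma stableP (S : {set T}) :
  reflect (forall x y, x \in S -> y \in S -> ~~ e x y) (stable e S).
Proof.
apply: (iffP forall_inP) => [H x y xS yS | H x xS].
  exact: (forall_inP (H x xS)).
by apply/forall_inP => y; apply: H.
Qed.

Lemma stable_adjF (S : {set T}) x y : stable e S -> x \in S -> y \in S -> e x y = false.
Proof. by move=> /stableP stS xS yS; apply/negbTE/stS. Qed.

Lemma stableS (A B : {set T}) : A \subset B -> stable e B -> stable e A.
Proof.
by move=> /subsetP sAB /stableP stB; apply/stableP => x y /sAB xB /sAB; apply: stB.
Qed.

Lemma stable0 : stable e set0.
Proof. by apply/stableP => x y; rewrite inE. Qed.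

Lemma stableU1 v (S : {set T}) :
  stable e S -> (forall y, y \in S -> ~~ e v y) -> stable e (v |: S).
Proof.
move=> /stableP stS vS; apply/stableP => x y /setU1P[-> | xS] /setU1P[-> | yS].
- by rewrite irr_e.
- exact: vS.
- by rewrite sym_e; apply: vS.
- exact: stS.
Qed.

Lemma stable1 v : stable e [set v].
Proof. by rewrite -[[set v]]setU0; apply: stableU1 stable0 _ => y; rewrite inE. Qed.

Definition maximal_stable_in (U S : {set T}) : bool :=
  [&& S \subset U, stable e S & [forall v in U :\: S, ~~ stable e (v |: S)]].

Lemma maximal_stable_inP (U S : {set T}) :
  reflect [/\ S \subset U, stable e S &
              forall v, v \in U -> v \notin S -> ~~ stable e (v |: S)]
          (maximal_stable_in U S).
Proof.
apply: (iffP and3P) => [[sSU stS /forall_inP maxS] | [sSU stS maxS]].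
  by split=> // v vU vS; apply: maxS; rewrite inE vS.
by split=> //; apply/forall_inP => v; rewrite inE => /andP[vS vU]; apply: maxS.
Qed.

Lemma maximal_stable_in_exists (U S : {set T}) :
  S \subset U -> stable e S ->
  exists2 S' : {set T}, S \subset S' & maximal_stable_in U S'.
Proof.
move=> sSU stS.
have [S' maxS' sSS'] := @maxset_exists _ (fun S => (S \subset U) && stable e S) S
  (introT andP (conj sSU stS)).
exists S' => //; have /andP[sS'U stS'] := maxsetp maxS'.
apply/maximal_stable_inP; split=> // v vU vS'; apply/negP => stvS'.
have PvS' : (v |: S' \subset U) && stable e (v |: S').
  by rewrite subUset sub1set vU sS'U stvS'.
have /setP/(_ v) := maxsetsup maxS' PvS' (subsetUr [set v] S').
by rewrite setU11 (negbTE vS').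
Qed.

Definition well_covered_in (U : {set T}) (a : nat) : Prop :=
  forall S, maximal_stable_in U S -> #|S| = a.

Definition no_isolated_in (U : {set T}) : Prop :=
  forall v, v \in U -> exists2 u, u \in U & e v u.

Lemma well_covered_in_card_le (U S : {set T}) a :
  well_covered_in U a -> S \subset U -> stable e S -> #|S| <= a.
Proof.
move=> wcU sSU stS; have [S' sSS' maxS'] := maximal_stable_in_exists sSU stS.
by rewrite -(wcU _ maxS') subset_leq_card.
Qed.

Lemma well_covered_in_gt0 (U : {set T}) a v :
  well_covered_in U a -> v \in U -> 0 < a.
Proof.
move=> wcU vU; rewrite -(cards1 v) (well_covered_in_card_le wcU) ?stable1 //.
by rewrite sub1set.
Qed.

Lemma well_covered_in_set0 a : well_covered_in set0 a -> a = 0.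
Proof.
move=> wc0; rewrite -(wc0 set0) ?cards0 //.
by apply/maximal_stable_inP; split; rewrite ?sub0set ?stable0 // => v; rewrite inE.
Qed.

Lemma well_covered_in_setT : well_covered e -> well_covered_in [set: T] (alpha e).
Proof.
move=> wc.
have maxT S : maximal_stable_in [set: T] S -> maximal_stable e S.
  case/maximal_stable_inP => _ stS maxS; rewrite /maximal_stable stS.
  by apply/forallP => v; apply/implyP; apply: maxS.
have [S0 _ maxS0] := maximal_stable_in_exists (sub0set [set: T]) stable0.
have wcS0 : well_covered_in [set: T] #|S0|.
  by move=> S maxS; apply: wc; apply: maxT.
suff -> : alpha e = #|S0| by [].
apply/eqP; rewrite eqn_leq; apply/andP; split.
  apply/bigmax_leqP => S stS.
  exact: well_covered_in_card_le wcS0 (subsetT S) stS.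
by have /maximal_stable_inP[_ stS0 _] := maxS0; apply: leq_bigmax_cond.
Qed.

Definition pendant_in (U : {set T}) (v u : T) : bool :=
  [&& v \in U, u \in U, e v u & [forall y in U, e v y ==> (y == u)]].

Lemma pendant_in_nbr (U : {set T}) v u y :
  pendant_in U v u -> y \in U -> e v y -> y = u.
Proof. by case/and4P => _ _ _ /forall_inP nbr yU /(implyP (nbr y yU)) /eqP. Qed.

Lemma not_pendant_in_nbr (U : {set T}) v u :
  ~~ pendant_in U v u -> v \in U -> u \in U -> e v u ->
  exists2 y, y \in U & e v y && (y != u).
Proof.
move=> npend vU uU evu; apply/exists_inP; apply: contraR npend => /exists_inPn nbr.
apply/and4P; split=> //; apply/forall_inP => y yU; apply/implyP => evy.
by have := nbr y yU; rewrite evy negbK.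
Qed.

(* Two leaves at [u] could replace [u] in a maximal stable set through [u]. *)
Lemma well_covered_in_pendant_uniq (U : {set T}) a u l1 l2 :
  well_covered_in U a -> pendant_in U l1 u -> pendant_in U l2 u -> l1 = l2.
Proof.
move=> wcU pend1 pend2; apply/eqP; apply: contraT => l12.
have /and4P[l1U uU el1u _] := pend1; have /and4P[l2U _ el2u _] := pend2.
have [I uI maxI] : exists2 I : {set T}, [set u] \subset I & maximal_stable_in U I.
  by apply: maximal_stable_in_exists; rewrite ?sub1set ?stable1.
have /maximal_stable_inP[sIU stI _] := maxI; rewrite sub1set in uI.
have l1I : l1 \notin I by apply: contraTN el1u => l1I; rewrite (stable_adjF stI l1I uI).
have l2I : l2 \notin I by apply: contraTN el2u => l2I; rewrite (stable_adjF stI l2I uI).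
set J := l1 |: (l2 |: (I :\ u)).
have sJU : J \subset U.
  by rewrite !subUset !sub1set l1U l2U (subset_trans (subD1set I u)).
have stJ : stable e J.
  have not_adj l y : pendant_in U l u -> y \in I :\ u -> ~~ e l y.
    move=> pend; rewrite !inE => /andP[yu yI]; apply: contra yu => ely.
    by rewrite (pendant_in_nbr pend _ ely) // (subsetP sIU).
  apply: stableU1.
    by apply: stableU1 (stableS (subD1set I u) stI) _ => y; apply: not_adj.
  move=> y /setU1P[-> | ]; last exact: not_adj.
  by apply/negP => /(pendant_in_nbr pend1 l2U) l2u; rewrite l2u irr_e in el2u.
have := well_covered_in_card_le wcU sJU stJ.
rewrite -(wcU _ maxI) !cardsU1 !inE (negbTE l12) (negbTE l1I) (negbTE l2I) !andbF.
by rewrite (cardsD1 u I) uI !add1n ltnn.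
Qed.

Definition drop_cnbhd (U : {set T}) v := [set w in U | (w != v) && ~~ e v w].
Definition nbrs_in (U : {set T}) v := [set w in U | e v w].

Lemma drop_cnbhd_sub (U : {set T}) v : drop_cnbhd U v \subset U.
Proof. by apply/subsetP => w; rewrite inE => /andP[]. Qed.

Lemma drop_cnbhd_proper (U : {set T}) v : v \in U -> drop_cnbhd U v \proper U.
Proof.
move=> vU; rewrite properE drop_cnbhd_sub; apply/subsetPn.
by exists v; rewrite // inE eqxx andbF.
Qed.

Lemma card_drop_cnbhd (U : {set T}) v :
  v \in U -> (#|drop_cnbhd U v| + #|nbrs_in U v|).+1 = #|U|.
Proof.
move=> vU; rewrite (cardsD1 v U) vU add1n -(cardsID [set w | e v w] (U :\ v)).
rewrite addnC; congr (_ + _).+1; apply: eq_card => w; rewrite !inE.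
  by case: (eqVneq w v) => [->|_]; rewrite ?irr_e ?andbF.
by case: (w \in U); case: (w != v); case: (e v w).
Qed.

Lemma maximal_stable_in_drop_cnbhd (U S : {set T}) v :
  v \in U -> maximal_stable_in (drop_cnbhd U v) S -> maximal_stable_in U (v |: S).
Proof.
move=> vU /maximal_stable_inP[sSU' stS maxS]; apply/maximal_stable_inP; split.
- by rewrite subUset sub1set vU (subset_trans sSU' (drop_cnbhd_sub U v)).
- by apply: stableU1 stS _ => y /(subsetP sSU'); rewrite inE => /and3P[].
move=> w wU; rewrite !inE negb_or => /andP[wv wS].
case: (boolP (e v w)) => evw.
  have vwS : v \in w |: (v |: S) by rewrite !inE eqxx orbT.
  by apply/negP => st; rewrite (stable_adjF st vwS (setU11 _ _)) in evw.
apply: contra (maxS w _ wS); last by rewrite inE wU wv evw.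
by apply: stableS; rewrite setUCA subsetUr.
Qed.

Lemma well_covered_in_drop_cnbhd (U : {set T}) a v :
  well_covered_in U a -> v \in U -> well_covered_in (drop_cnbhd U v) a.-1.
Proof.
move=> wcU vU S maxS; rewrite -(wcU _ (maximal_stable_in_drop_cnbhd vU maxS)).
have /maximal_stable_inP[sSU' _ _] := maxS.
have vS : v \notin S by apply/negP => /(subsetP sSU'); rewrite inE eqxx andbF.
by rewrite cardsU1 vS.
Qed.

Lemma drop_cnbhd_isolated_nbr (U : {set T}) v w y :
  w \in drop_cnbhd U v -> ~~ [exists x in drop_cnbhd U v, e w x] ->
  y \in U -> e w y -> e v y.
Proof.
rewrite inE => /and3P[_ wv nevw] /exists_inPn isol yU ewy.
have yv : y != v by apply: contraNneq nevw => yv; rewrite sym_e -yv.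
by apply: contraTT ewy => nevy; apply: isol; rewrite inE yU yv nevy.
Qed.

Lemma no_isolated_in_drop_pendant (U : {set T}) a v u :
  well_covered_in U a -> no_isolated_in U -> pendant_in U v u ->
  no_isolated_in (drop_cnbhd U v).
Proof.
move=> wcU noU pend w wU'; apply/exists_inP; apply: contraT => isol.
have /and3P[wU wv _] : [&& w \in U, w != v & ~~ e v w] by rewrite inE in wU'.
have nbr_u y : y \in U -> e w y -> y = u.
  move=> yU ewy; apply: (pendant_in_nbr pend yU).
  exact: drop_cnbhd_isolated_nbr wU' isol yU ewy.
have [y yU ewy] := noU w wU; have /and4P[_ uU _ _] := pend.
have pendw : pendant_in U w u.
  rewrite /pendant_in wU uU -(nbr_u y yU ewy) ewy (nbr_u y yU ewy) /=.
  by apply/forall_inP => z zU; apply/implyP => /(nbr_u z zU) ->.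
by rewrite (well_covered_in_pendant_uniq wcU pendw pend) eqxx in wv.
Qed.

Hypothesis girth : girth_ge5 e.

Lemma no_isolated_in_drop_cnbhd (U : {set T}) v :
  (forall w u, ~~ pendant_in U w u) -> no_isolated_in U ->
  no_isolated_in (drop_cnbhd U v).
Proof.
move=> nopend noU w wU'; apply/exists_inP; apply: contraT => isol.
have /and3P[wU wv _] : [&& w \in U, w != v & ~~ e v w] by rewrite inE in wU'.
have [y1 y1U ewy1] := noU w wU.
have [y2 y2U /andP[ewy2 y21]] := not_pendant_in_nbr (nopend w y1) wU y1U ewy1.
have evy1 := drop_cnbhd_isolated_nbr wU' isol y1U ewy1.
have evy2 := drop_cnbhd_isolated_nbr wU' isol y2U ewy2.
have vw : v != w by rewrite eq_sym.
have [_ no_C4] := girth; case: (no_C4 v y2 w y1 vw y21).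
by do !split=> //; rewrite sym_e.
Qed.

Definition perfect_matching_in (U : {set T}) (m : T -> T) : Prop :=
  forall v, v \in U -> [/\ m v \in U, e v (m v) & m (m v) = v].

Definition matching_bound (U : {set T}) (a : nat) : Prop :=
  2 * a <= #|U| /\ (2 * a = #|U| -> exists m, perfect_matching_in U m).

Lemma matching_bound_pendant (U : {set T}) a v u :
  well_covered_in U a -> pendant_in U v u ->
  matching_bound (drop_cnbhd U v) a.-1 -> matching_bound U a.
Proof.
move=> wcU pend [le2 eq2]; have /and4P[vU uU evu _] := pend.
have nbrs_v : nbrs_in U v = [set u].
  by apply/setP => w; rewrite !inE; apply/andP/eqP => [[/(pendant_in_nbr pend)] | ->].
have cardU : #|U| = (#|drop_cnbhd U v|).+2.
  by rewrite -(card_drop_cnbhd vU) nbrs_v cards1 addn1.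
rewrite /matching_bound cardU -(prednK (well_covered_in_gt0 wcU vU)).
rewrite mulnS add2n !ltnS.
split=> // /succn_inj/succn_inj/eq2[m' pm'].
have uvF : (u == v) = false by apply: contraTF evu => /eqP ->; rewrite irr_e.
exists (fun w => if w == v then u else if w == u then v else m' w) => w wU.
case: (eqVneq w v) => [-> | wv]; first by rewrite !eqxx uvF.
case: (eqVneq w u) => [-> | wu]; first by rewrite eqxx sym_e.
have wU' : w \in drop_cnbhd U v.
  by rewrite inE wU wv; apply: contra wu => /(pendant_in_nbr pend wU) ->.
have [m'wU' ewm' m'K] := pm' w wU'.
have /and3P[m'wU m'wv nevm'w] : [&& m' w \in U, m' w != v & ~~ e v (m' w)].
  by rewrite inE in m'wU'.
have m'wu : m' w != u by apply: contraNneq nevm'w => ->.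
by rewrite (negbTE m'wv) (negbTE m'wu) m'K.
Qed.

Lemma matching_bound_two_nbrs (U : {set T}) a v :
  well_covered_in U a -> v \in U -> 1 < #|nbrs_in U v| ->
  matching_bound (drop_cnbhd U v) a.-1 -> matching_bound U a.
Proof.
move=> wcU vU nbrs2 [le2 _].
have lt2 : 2 * a < #|U|.
  rewrite -(card_drop_cnbhd vU) -(prednK (well_covered_in_gt0 wcU vU)).
  by rewrite mulnS add2n ltnS -addn2; apply: leq_add.
by split=> [|eq2]; [exact: ltnW | rewrite eq2 ltnn in lt2].
Qed.

Lemma well_covered_in_matching_bound (U : {set T}) a :
  well_covered_in U a -> no_isolated_in U -> matching_bound U a.
Proof.
have [n] := ubnP #|U|; elim: n U a => // n IH U a /ltnSE leUn wcU noU.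
case: (set_0Vmem U) => [U0 | [v0 v0U]].
  move: wcU; rewrite U0 => /well_covered_in_set0 ->.
  by split=> // _; exists id => v; rewrite inE.
have IHdrop v : v \in U -> no_isolated_in (drop_cnbhd U v) ->
    matching_bound (drop_cnbhd U v) a.-1.
  move=> vU; apply: IH (well_covered_in_drop_cnbhd wcU vU).
  exact: leq_trans (proper_card (drop_cnbhd_proper vU)) leUn.
case: (boolP [exists v, exists u, pendant_in U v u]).
  case/existsP=> v /existsP[u pend]; have /and4P[vU _ _ _] := pend.
  apply: (matching_bound_pendant wcU pend (IHdrop v vU _)).
  exact: no_isolated_in_drop_pendant wcU noU pend.
move=> /existsPn nopend; have {}nopend w u : ~~ pendant_in U w u.
  by move/existsPn: (nopend w); apply.
have [u1 u1U evu1] := noU v0 v0U.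
have [u2 u2U /andP[evu2 u21]] := not_pendant_in_nbr (nopend v0 u1) v0U u1U evu1.
have noU' := no_isolated_in_drop_cnbhd (v := v0) nopend noU.
apply: (matching_bound_two_nbrs wcU v0U _ (IHdrop v0 v0U noU')).
have sub : [set u2; u1] \subset nbrs_in U v0.
  by apply/subsetP => w; rewrite !inE => /orP[] /eqP ->; rewrite ?u1U ?u2U.
by rewrite (leq_trans _ (subset_leq_card sub)) // cards2 u21.
Qed.

Lemma cnbhdP (A : {set T}) w :
  reflect (w \in A \/ exists2 a, a \in A & e w a) (w \in cnbhd e A).
Proof.
rewrite !inE; case: (boolP (w \in A)) => wA /=; first by left; left.
by apply: (iffP exists_inP) => [[a aA ewa] | [// | [a aA ewa]]]; [right | ]; exists a.
Qed.

Lemma cnbhd_sup (A : {set T}) : A \subset cnbhd e A.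
Proof. exact: subsetUl. Qed.

Lemma cnbhd_adj (A : {set T}) w a : a \in A -> e w a -> w \in cnbhd e A.
Proof. by move=> aA ewa; apply/cnbhdP; right; exists a. Qed.

Lemma cnbhdS (A B : {set T}) : A \subset B -> cnbhd e A \subset cnbhd e B.
Proof.
move=> /subsetP sAB; apply/subsetP => w /cnbhdP[/sAB wB | [a /sAB aB ewa]].
  exact: (subsetP (cnbhd_sup B)).
exact: cnbhd_adj aB ewa.
Qed.

Section PendantMatching.
Variable m : T -> T.
Hypothesis mE : forall v, e v (m v).
Hypothesis mK : involutive m.

Definition leaf v := [forall u, e v u ==> (u == m v)].

Lemma leaf_nbr v u : leaf v -> e v u -> u = m v.
Proof. by move/forallP/(_ u)/implyP => nbr /nbr /eqP. Qed.

Lemma stable_matching_cover (I : {set T}) v :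
  stable e I -> #|T| = 2 * #|I| -> (v \in I) || (m v \in I).
Proof.
move=> stI cardT.
have disj : [disjoint I & m @: I].
  apply/pred0P => z /=; apply/andP => -[zI /imsetP[w wI zE]].
  by have := mE w; rewrite -zE (stable_adjF stI wI zI).
have cover : [set: T] \subset I :|: m @: I.
  rewrite subTset eqEcard subsetT cardsT cardT mul2n -addnn.
  rewrite -[X in _ + X](card_imset I (inv_inj mK)) -cardsUI.
  by rewrite (disjoint_setI0 disj) cards0 addn0 leqnn.
case/setUP: (subsetP cover v (in_setT v)) => [-> // | /imsetP[w wI ->]].
by rewrite mK wI orbT.
Qed.

(* Otherwise [v] and [m v] have neighbours [x] and [y] off the edge; girth 5
   makes [[set x; y]] stable, and a maximal stable set through [x] and [y],
   of size |T|/2, would miss the matching edge {v, m v}. *)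
Lemma matching_leaf_end (a : nat) v :
  well_covered_in [set: T] a -> #|T| = 2 * a -> leaf v || leaf (m v).
Proof.
move=> wcT cardT; have [no_C3 no_C4] := girth.
apply: contraT => /norP[/forallPn[x] + /forallPn[y]].
rewrite !negb_imply mK => /andP[evx xmv] /andP[emvy yv].
have emvv : e (m v) v by rewrite sym_e.
have xy : x != y.
  apply: contraTneq emvy => <-; apply/negP => emvx.
  by case: (no_C3 v x (m v)); do !split; rewrite // sym_e.
have nexy : ~~ e x y.
  apply/negP => exy; have vy : v != y by rewrite eq_sym.
  by case: (no_C4 v x y (m v) vy xmv); do !split; rewrite // sym_e.
have [I sxyI maxI] : exists2 I : {set T},
    [set x; y] \subset I & maximal_stable_in [set: T] I.
  apply: maximal_stable_in_exists; rewrite ?subsetT //.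
  by apply: stableU1 (stable1 _) _ => z; rewrite inE => /eqP ->.
have /maximal_stable_inP[_ stI _] := maxI.
have [xI yI] : x \in I /\ y \in I by rewrite !(subsetP sxyI) ?inE ?eqxx ?orbT.
have cardTI : #|T| = 2 * #|I| by rewrite (wcT _ maxI).
case/orP: (stable_matching_cover v stI cardTI) => [vI | mvI].
  by rewrite (stable_adjF stI vI xI) in evx.
by rewrite (stable_adjF stI mvI yI) in emvy.
Qed.

Hypothesis leaf_end : forall v, leaf v || leaf (m v).

Definition matching_closed (A : {set T}) : Prop :=
  stable e A /\ {in cnbhd e A, forall x, m x \in cnbhd e A}.

Lemma partner_in_matching_closed (X : {set T}) w a :
  matching_closed X -> w \notin X -> a \in X -> e w a -> m w \in X.
Proof.
move=> [_ clX] wX aX ewa.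
have /cnbhdP[// | [b bX emwb]] := clX w (cnbhd_adj aX ewa).
case/orP: (leaf_end w) => [lw | lmw]; first by rewrite -(leaf_nbr lw ewa).
by have := leaf_nbr lmw emwb; rewrite mK => bw; rewrite -bw bX in wX.
Qed.

Lemma matching_closed_card_le (A B : {set T}) :
  matching_closed A -> stable e B -> #|B :&: cnbhd e A| <= #|A|.
Proof.
move=> clA stB; pose f b := if b \in A then b else m b.
have fA b : b \in B :&: cnbhd e A -> f b \in A.
  rewrite /f => /setIP[_ /cnbhdP[bA | [a aA eba]]]; first by rewrite bA.
  by case: ifP => // /negbT bA; apply: partner_in_matching_closed clA bA aA eba.
have f_inj : {in B :&: cnbhd e A &, injective f}.
  move=> b1 b2 /setIP[b1B _] /setIP[b2B _]; rewrite /f.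
  case: ifP => b1A; case: ifP => b2A // E.
  - by have := mE b2; rewrite -E (stable_adjF stB b2B b1B).
  - by have := mE b1; rewrite E (stable_adjF stB b1B b2B).
  - by rewrite -(mK b1) E mK.
rewrite -(card_in_imset f_inj); apply/subset_leq_card/subsetP => _ /imsetP[b bBA ->].
exact: fA.
Qed.

Lemma matching_closed_Psi (A : {set T}) : matching_closed A -> A \in Psi e.
Proof.
move=> clA; rewrite inE /local_max_stable /max_stable_in cnbhd_sup (proj1 clA) /=.
apply/forallP => B; apply/implyP => /andP[sB stB].
by rewrite -(setIidPl sB) matching_closed_card_le.
Qed.

(* If [x] lies in N[A] but [m x] does not, [swap_at A x] is a larger
   stable subset of N[A]. *)
Definition swap_at (A : {set T}) x := x |: [set (if e x a then m a else a) | a in A].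

Lemma card_swap_at (A : {set T}) x :
  stable e A -> x \notin A -> m x \notin A -> #|swap_at A x| = #|A|.+1.
Proof.
move=> stA xA mxA; rewrite cardsU1 card_in_imset => [|a1 a2 a1A a2A].
  suff -> : x \notin [set (if e x a then m a else a) | a in A] by [].
  apply/imsetP => -[a aA]; case: ifP => _ xE.
    by rewrite xE mK aA in mxA.
  by rewrite xE aA in xA.
case: ifP => _; case: ifP => _ // E.
- by rewrite -(mK a1) E mK.
- by have := mE a1; rewrite E (stable_adjF stA a1A a2A).
- by have := mE a2; rewrite -E (stable_adjF stA a2A a1A).
Qed.

Lemma stable_swap_at (A : {set T}) x :
  stable e A -> x \notin A -> {in A, forall a, e x a -> leaf (m a)} ->
  stable e (swap_at A x).
Proof.
move=> stA xA leafA; apply: stableU1.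
  apply/stableP => _ _ /imsetP[a aA ->] /imsetP[b bA ->].
  case: ifP => exa; case: ifP => exb.
  - apply/negP => /(leaf_nbr (leafA a aA exa)); rewrite mK => mba.
    by have := mE b; rewrite mba (stable_adjF stA bA aA).
  - apply/negP => /(leaf_nbr (leafA a aA exa)); rewrite mK => ba.
    by rewrite ba exa in exb.
  - apply/negP; rewrite sym_e => /(leaf_nbr (leafA b bA exb)); rewrite mK => ab.
    by rewrite ab exb in exa.
  - by rewrite (stable_adjF stA aA bA).
move=> _ /imsetP[a aA ->]; case: ifP => [exa | /negbT //].
apply/negP; rewrite sym_e => /(leaf_nbr (leafA a aA exa)); rewrite mK => xa.
by rewrite xa aA in xA.
Qed.

Lemma swap_at_sub (A : {set T}) x : x \in cnbhd e A -> swap_at A x \subset cnbhd e A.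
Proof.
move=> xN; apply/subsetP => _ /setU1P[-> // | /imsetP[a aA ->]].
case: ifP => _; last exact: (subsetP (cnbhd_sup A)).
by apply: (cnbhd_adj aA); rewrite sym_e.
Qed.

Lemma Psi_matching_closed (A : {set T}) : A \in Psi e -> matching_closed A.
Proof.
rewrite inE => /and3P[_ stA /forallP maxA]; split=> // x xN; apply: contraT => mxN.
have mxA : m x \notin A by apply: contra mxN; apply: (subsetP (cnbhd_sup A)).
have xA : x \notin A by apply: contra mxN => xA; apply: (cnbhd_adj xA); rewrite sym_e.
have leafA : {in A, forall a, e x a -> leaf (m a)}.
  move=> a aA exa; case/orP: (leaf_end a) => // la.
  have eax : e a x by rewrite sym_e.
  by move: mxA; rewrite (leaf_nbr la eax) mK aA.
have := maxA (swap_at A x).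
by rewrite swap_at_sub // stable_swap_at // card_swap_at // ltnn.
Qed.

Lemma matching_closedD1 (X : {set T}) x :
  matching_closed X -> x \in X -> ~~ leaf x || [forall y in X, leaf y] ->
  matching_closed (X :\ x).
Proof.
move=> [stX clX] xX hx; split=> [|w]; first exact: stableS (subD1set X x) stX.
case/cnbhdP => [wX' | [a /setD1P[ax aX] ewa]].
  by apply: (cnbhd_adj wX'); rewrite sym_e.
have wX : w \notin X by apply: contraTN ewa => wX; rewrite (stable_adjF stX wX aX).
have mwX := partner_in_matching_closed (conj stX clX) wX aX ewa.
apply: (subsetP (cnbhd_sup _)); rewrite in_setD1 mwX andbT.
apply: contraNneq ax => mwx; case/orP: hx => [nlx | /forall_inP all_leaf].
  have lw : leaf w by move: (leaf_end x); rewrite (negbTE nlx) -mwx mK.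
  by rewrite (leaf_nbr lw ewa) mwx.
have eaw : e a w by rewrite sym_e.
by rewrite -mwx (leaf_nbr (all_leaf a aX) eaw) mK.
Qed.

Lemma matching_closedU1 (X Y : {set T}) x :
  matching_closed X -> matching_closed Y -> x \in X :\: cnbhd e Y ->
  leaf x || [forall z in X :\: cnbhd e Y, ~~ leaf z] -> matching_closed (x |: Y).
Proof.
move=> [stX clX] [stY clY] /setDP[xX xNY] hx.
have sNY : cnbhd e Y \subset cnbhd e (x |: Y) by apply/cnbhdS/subsetUr.
split=> [|w].
  by apply: stableU1 stY _ => y yY; apply: contra xNY; apply: cnbhd_adj yY.
case/cnbhdP => [/setU1P[-> | wY] | [a /setU1P[-> | aY] ewa]].
- by apply: (cnbhd_adj (setU11 x Y)); rewrite sym_e.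
- by apply/(subsetP sNY)/clY/(subsetP (cnbhd_sup Y)).
- case: (eqVneq w (m x)) => [-> | wmx].
    by rewrite mK (subsetP (cnbhd_sup _)) ?setU11.
  have exw : e x w by rewrite sym_e.
  have nlx : ~~ leaf x by apply: contra wmx => lx; rewrite (leaf_nbr lx exw).
  have wX : w \notin X by apply: contraTN ewa => wX; rewrite (stable_adjF stX wX xX).
  have mwX := partner_in_matching_closed (conj stX clX) wX xX ewa.
  case: (boolP (m w \in cnbhd e Y)) => [mwNY | mwNY]; first exact: (subsetP sNY).
  have nlmw : ~~ leaf (m w).
    by move: hx; rewrite (negbTE nlx) => /forall_inP; apply; rewrite inE mwX mwNY.
  case/orP: (leaf_end w) => [lw | lmw]; last by rewrite lmw in nlmw.
  by move: wmx; rewrite (leaf_nbr lw ewa) mK eqxx.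
- by apply/(subsetP sNY)/clY/(cnbhd_adj aY).
Qed.

Lemma greedoid_Psi : greedoid (Psi e).
Proof.
split; [|split].
- apply/set0Pn; exists set0; apply: matching_closed_Psi; split; first exact: stable0.
  by move=> x /cnbhdP[|[a]]; rewrite inE.
- move=> X /Psi_matching_closed clX /set0Pn[x0 x0X].
  case: (boolP [exists x in X, ~~ leaf x]).
    case/exists_inP => x xX nlx; exists x => //.
    by apply/matching_closed_Psi/matching_closedD1; rewrite ?nlx.
  move=> /exists_inPn all_leaf; exists x0 => //.
  apply/matching_closed_Psi/matching_closedD1 => //.
  by apply/orP; right; apply/forall_inP => y /all_leaf; rewrite negbK.
move=> X Y /Psi_matching_closed clX /Psi_matching_closed clY cardXY.
have sXY : X :\: cnbhd e Y \subset X :\: Y by apply/setDS/cnbhd_sup.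
have /set0Pn[z zXY] : X :\: cnbhd e Y != set0.
  rewrite setD_eq0; apply: contraTN (matching_closed_card_le clY (proj1 clX)).
  by move=> /setIidPl ->; rewrite -ltnNge cardXY.
case: (boolP [exists x in X :\: cnbhd e Y, leaf x]).
  case/exists_inP => x xXY lx; exists x; first exact: (subsetP sXY).
  by apply/matching_closed_Psi/(matching_closedU1 clX clY xXY); rewrite lx.
move=> /exists_inPn non_leaf; exists z; first exact: (subsetP sXY).
apply/matching_closed_Psi/(matching_closedU1 clX clY zXY).
by apply/orP; right; apply/forall_inP.
Qed.

End PendantMatching.

End Graph.

Theorem corollary1 (T : finType) (e : rel T) :
  simple_graph e -> very_well_covered e -> girth_ge5 e -> greedoid (Psi e).
Proof.
move=> [sym_e irr_e] [wc [noiso cardT]] girth.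
have wcT := well_covered_in_setT wc.
have noT : no_isolated_in e [set: T] by move=> v _; have [u evu] := noiso v; exists u.
have [_ matching] := well_covered_in_matching_bound sym_e irr_e girth wcT noT.
have [m pm] : exists m, perfect_matching_in e [set: T] m.
  by apply: matching; rewrite cardsT cardT.
have mE v : e v (m v) by case: (pm v (in_setT v)).
have mK : involutive m by move=> v; case: (pm v (in_setT v)).
apply: (greedoid_Psi sym_e irr_e mE mK) => v.
exact: (matching_leaf_end sym_e irr_e girth mE mK _ wcT cardT).
Qed.
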